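(* Let $\mathfrak A$ be an associative $\mathcal A$-algebra with finite basis $B$ compatible with $1$, satisfying $P_1,P_2,P_3$, and let $\Phi:\mathfrak A\to\mathfrak A^\infty_{\mathcal A}=\mathcal A\otimes_{\mathbb Z}\mathfrak A^\infty$ be the $\mathcal A$-linear map $\Phi(b)=\sum_{b_1\in\mathcal D,\,b_2\in B,\,b_1\sim b_2}r^{b_2}_{b,b_1}t_{b_2}$. Make $\mathfrak A$ a left $\mathfrak A^\infty_{\mathcal A}$-module by $t_b*b'=\sum_{b''\in B}\gamma^{b''}_{b,b'}b''$. Then for all $x\in\mathfrak A$ and $b\in B$ we have $xb\equiv\Phi(x)*b\pmod{\mathfrak A_{\prec b}}$, where $\mathfrak A_{\prec b}=\bigoplus_{b'\in B,\,b'\prec b}\mathcal Ab'$.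
   Context: $\mathcal A=\mathbb Z[v,v^{-1}]$. $B$ compatible with $1$: $1=\sum_\mu 1_\mu$ with distinct $1_\mu\in B$, $1_\mu1_{\mu'}=\delta_{\mu\mu'}1_\mu$, and every $b\in B$ satisfies $1_\mu b1_{\mu'}=b$ for some $\mu,\mu'$. Write $bb'=\sum_{b''}r^{b''}_{b,b'}b''$ with $r^{b''}_{b,b'}\in\mathcal A$. $b'\preceq b$ iff $b'$ lies in every $K\subset B$ with $b\in K$ and $\sum_{b_1\in K}\mathcal Ab_1$ a two-sided ideal; $b\sim b'$ iff $b\preceq b'\preceq b$ (two-sided cells); $b'\prec b$ iff $b'\preceq b$ and $b'\not\sim b$. $a(b)$: least $m\ge0$ with $v^{-m}r^{b''}_{b,b'}\in\mathbb Z[v^{-1}]$ for all $b',b''$ in the cell of $b$. $P_1$: $a$ constant on cells. $\gamma^{b''}_{b,b'}\in\mathbb Z$: $v^{-a(b)}r^{b''}_{b,b'}\equiv\gamma^{b''}_{b,b'}\bmod v^{-1}\mathbb Z[v^{-1}]$ if $b,b',b''$ lie in one cell, $0$ otherwise; $\mathfrak A^\infty$ is the ring with $\mathbb Z$-basis $\{t_b\}$ and $t_bt_{b'}=\sum\gamma^{b''}_{b,b'}t_{b''}$. $P_2$: $\mathfrak A^\infty$ has a unit $\sum_{b\in\mathcal D}t_b$ for some $\mathcal D\subset B$ (distinguished elements), compatible with the basis. $P_3$: for $b_2\sim b_4$, $\sum_{\beta\sim b_2}r^\beta_{b_1,b_2}(v)r^{b_4}_{\beta,b_3}(v')=\sum_{\beta\sim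 b_2}r^{b_4}_{b_1,\beta}(v)r^\beta_{b_2,b_3}(v')$ with $v'$ an independent indeterminate. *)

From HB Require Import structures.
From mathcomp Require Import all_boot all_order all_algebra.
From mathcomp Require Import finmap.
From mathcomp Require Import monalg.

Set Implicit Arguments.
Unset Strict Implicit.
Unset Printing Implicit Defensive.

Import GRing.Theory.
Local Open Scope fset_scope.
Local Open Scope ring_scope.

(* Group algebra R[Z] = R[v, v^-1] : finitely supported functions int -> R,
   g@_k = coefficient of v^k. *)
Section LaurentRing.
Context (R : nzRingType).
Implicit Types (g : {malg R[int]}).

Local Notation "g1 *M_[ k1 , k2 ] g2" :=
  << g1@_k1 * g2@_k2 *g (k1 + k2)%R >>
  (at level 40, no associativity, format "g1  *M_[ k1 ,  k2 ]  g2").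

Definition lone : {malg R[int]} := << 1 *g 0%R >>.

Definition lmul g1 g2 : {malg R[int]} :=
  \sum_(k1 <- msupp g1) \sum_(k2 <- msupp g2) g1 *M_[k1, k2] g2.

Lemma lmullw (d1 d2 : {fset int}) g1 g2 :
  msupp g1 `<=` d1 -> msupp g2 `<=` d2 ->
  lmul g1 g2 = \sum_(k1 <- d1) \sum_(k2 <- d2) g1 *M_[k1, k2] g2.
Proof.
move=> le_d1 le_d2; rewrite /lmul (big_fset_incl _ le_d1) /=.
  apply/eq_bigr=> k1 _; apply/big_fset_incl => // k _ /mcoeff_outdom ->.
  by rewrite mulr0 monalgU0.
move=> k _ /mcoeff_outdom g1k.
by rewrite big1 => // k' _; rewrite g1k mul0r monalgU0.
Qed.

Lemma lmulrw (d1 d2 : {fset int}) g1 g2 : msupp g1 `<=` d1 -> msupp g2 `<=` d2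
  -> lmul g1 g2 = \sum_(k2 <- d2) \sum_(k1 <- d1) g1 *M_[k1, k2] g2.
Proof. by move=> le_d1 le_d2; rewrite (lmullw le_d1 le_d2) exchange_big. Qed.

Lemma lmul0g : left_zero 0 lmul.
Proof. by move=> g; rewrite /lmul msupp0 big_seq_fset0. Qed.

Lemma lmulg0 : right_zero 0 lmul.
Proof. by move=> g; rewrite (lmulrw (fsubset_refl _) (fsubset_refl _)) msupp0 big_seq_fset0. Qed.

Lemma lmulUg c k g :
  lmul << c *g k >> g = \sum_(k' <- msupp g) << c * g@_k' *g (k + k')%R >>.
Proof.
rewrite (lmullw msuppU_le (fsubset_refl _)) big_seq_fset1.
by apply/eq_bigr => k' _; rewrite mcoeffUU.
Qed.

Lemma lmulgU c k g :
  lmul g << c *g k >> = \sum_(k' <- msupp g) << g@_k' * c *g (k' + k)%R >>.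
Proof.
rewrite (lmulrw (fsubset_refl _) msuppU_le) big_seq_fset1.
by apply/eq_bigr=> k' _; rewrite mcoeffUU.
Qed.

Lemma lmulUU c1 c2 k1 k2 :
  lmul << c1 *g k1 >> << c2 *g k2 >> = << c1 * c2 *g (k1 + k2)%R >>.
Proof. by rewrite (lmulrw msuppU_le msuppU_le) !big_seq_fset1 !mcoeffUU. Qed.

Lemma lmulEl1 g1 g2 :
  lmul g1 g2 = \sum_(k1 <- msupp g1) lmul << g1@_k1 *g k1 >> g2.
Proof. by apply/eq_bigr=> k _; rewrite lmulUg. Qed.

Lemma lmulEr1 g1 g2 :
  lmul g1 g2 = \sum_(k2 <- msupp g2) lmul g1 << g2@_k2 *g k2 >>.
Proof.
rewrite (lmulrw (fsubset_refl _) (fsubset_refl _)).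
by apply/eq_bigr=> k _; rewrite lmulgU.
Qed.

Lemma lmul1g : left_id lone lmul.
Proof.
move=> g; rewrite lmulUg [RHS]monalgE.
by apply/eq_bigr=> kg _; rewrite mul1r add0r.
Qed.

Lemma lmulg1 : right_id lone lmul.
Proof.
move=> g; rewrite lmulgU [RHS]monalgE.
by apply/eq_bigr=> k _; rewrite mulr1 addr0.
Qed.

Lemma lmulgDl : left_distributive lmul +%R.
Proof.
move=> g1 g2 g; rewrite [in RHS](@lmullw _ (msupp g) _ _ (fsubsetUl _ (msupp g2)) (fsubset_refl _)).
rewrite [in RHS](@lmullw _ (msupp g) _ _ (fsubsetUr (msupp g1) _) (fsubset_refl _)).
rewrite (@lmullw _ (msupp g) _ _ (msuppD_le _ _) (fsubset_refl _)).
rewrite -big_split /=; apply/eq_bigr=> k1 _.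
rewrite -big_split /=; apply/eq_bigr=> k2 _.
by rewrite mcoeffD mulrDl monalgUD.
Qed.

Lemma lmulgDr : right_distributive lmul +%R.
Proof.
move=> g g1 g2; rewrite [in RHS](@lmulrw (msupp g) _ _ _ (fsubset_refl _) (fsubsetUl _ (msupp g2))).
rewrite [in RHS](@lmulrw (msupp g) _ _ _ (fsubset_refl _) (fsubsetUr (msupp g1) _)).
rewrite (@lmulrw (msupp g) _ _ _ (fsubset_refl _) (msuppD_le _ _)).
rewrite -big_split /=; apply/eq_bigr => k1 _.
rewrite -big_split /=; apply/eq_bigr => k2 _.
by rewrite mcoeffD mulrDr monalgUD.
Qed.

Lemma lmulA : associative lmul.
Proof.
move=> g1 g2 g3.
rewrite [RHS](big_morph (lmul^~ _) (fun _ _ => lmulgDl _ _ _) (lmul0g _)).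
rewrite lmulEl1; apply/eq_bigr=> k1 _.
rewrite [LHS](big_morph (lmul _) (fun _ _ => lmulgDr _ _ _) (lmulg0 _)).
rewrite [RHS](big_morph (lmul^~ _) (fun _ _ => lmulgDl _ _ _) (lmul0g _)).
apply/eq_bigr=> k2 _.
rewrite [LHS](big_morph (lmul _) (fun _ _ => lmulgDr _ _ _) (lmulg0 _)).
by rewrite lmulEr1; apply/eq_bigr=> k3 _; rewrite !lmulUU mulrA addrA.
Qed.

Lemma lone_neq0 : lone != 0.
Proof. by apply/eqP/malgP=> /(_ 0%R) /eqP; rewrite mcoeffUU mcoeff0 oner_eq0. Qed.

End LaurentRing.

(* A fresh head constant, so that the ring structure below does not clash
   with the canonical structures of multinomials (which are keyed on malg). *)
Definition lpoly (R : nzRingType) : predArgType := {malg R[int]}.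
HB.instance Definition _ (R : nzRingType) := GRing.Zmodule.on (lpoly R).

HB.instance Definition _ (R : nzRingType) := GRing.Zmodule_isNzRing.Build (lpoly R)
  (@lmulA R) (@lmul1g R) (@lmulg1 R) (@lmulgDl R) (@lmulgDr R) (@lone_neq0 R).

Lemma lpolyM_def (R : nzRingType) (g1 g2 : lpoly R) : g1 * g2 = lmul g1 g2.
Proof. by []. Qed.

Lemma lpolyC (R : comNzRingType) : @commutative (lpoly R) _ *%R.
Proof.
move=> g1 g2; rewrite !lpolyM_def /lmul exchange_big /=.
by apply/eq_bigr=> k1 _; apply/eq_bigr=> k2 _; rewrite mulrC addrC.
Qed.

HB.instance Definition _ (R : comNzRingType) :=
  GRing.PzRing_hasCommutativeMul.Build (lpoly R) (@lpolyC R).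

(* The ring A = Z[v, v^-1]; for x : laurent, x@_k is the coefficient of v^k. *)
Definition laurent : comNzRingType := lpoly int.

(* An algebra with basis B over a commutative ring R is encoded by its      *)
(* structure constants c : B -> B -> B -> R, where c b b' b'' is the        *)
(* coefficient of b'' in the product b b' (the paper's r^{b''}_{b,b'}).     *)
(* Elements of the algebra are coefficient vectors {ffun B -> R}.           *)
Section StructConst.
Context {B : finType} {R : comNzRingType}.
Implicit Types (c : B -> B -> B -> R) (U K : {set B}) (x y : {ffun B -> R}).

Definition bvec (b : B) : {ffun B -> R} := [ffun b' => (b' == b)%:R].

Definition amul c x y : {ffun B -> R} :=
  [ffun b'' => \sum_b \sum_b' x b * y b' * c b b' b''].

Definition sc_assoc c : Prop :=
  forall b1 b2 b3 b4 : B,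
    \sum_beta c b1 b2 beta * c beta b3 b4 = \sum_beta c b2 b3 beta * c b1 beta b4.

(* "B compatible with 1": 1 = sum_{u in U} u (U a set of distinct basis
   elements) is a two-sided unit, the u in U are pairwise orthogonal
   idempotents, and every b satisfies u b u' = b for some u, u' in U. *)
Definition sc_compatible_one c U : Prop :=
  [/\ (forall b b'', \sum_(u in U) c u b b'' = (b == b'')%:R),
      (forall b b'', \sum_(u in U) c b u b'' = (b == b'')%:R),
      (forall u u' b'', u \in U -> u' \in U ->
          c u u' b'' = ((u == u') && (u == b''))%:R)
    & (forall b, exists2 u, u \in U & exists2 u', u' \in U &
          forall b'', \sum_beta c u b beta * c beta u' b'' = (b == b'')%:R)].

Definition in_span K x : Prop := forall b, b \notin K -> x b = 0.

Definition ideal_span c K : Prop :=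
  forall x y, in_span K y -> in_span K (amul c x y) /\ in_span K (amul c y x).

Definition ideal_spanb c K : bool :=
  [forall b1 in K, forall b, forall b'' in ~: K,
     (c b b1 b'' == 0) && (c b1 b b'' == 0)].

Lemma bvec_in_span K b : b \in K -> in_span K (bvec b).
Proof. by move=> bK b' b'K; rewrite ffunE; case: eqP => // eb; rewrite eb bK in b'K. Qed.

Lemma amul_bvec c b1 b2 b'' : amul c (bvec b1) (bvec b2) b'' = c b1 b2 b''.
Proof.
rewrite ffunE (bigD1 b1) //=.
have -> : \sum_(i | i != b1) \sum_b' bvec b1 i * bvec b2 b' * c i b' b'' = 0.
  by apply: big1 => b nb; apply: big1 => b' _; rewrite ffunE (negbTE nb) !mul0r.
rewrite addr0 (bigD1 b2) //=.
have -> : \sum_(i | i != b2) bvec b1 b1 * bvec b2 i * c b1 i b'' = 0.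
  by apply: big1 => b nb; rewrite [bvec b2 b]ffunE (negbTE nb) mulr0 mul0r.
by rewrite !ffunE !eqxx !mul1r addr0.
Qed.

Lemma ideal_spanP c K : reflect (ideal_span c K) (ideal_spanb c K).
Proof.
apply: (iffP idP) => [/forallP H x y yK | H].
  have key b b1 b'' : b'' \notin K -> (c b b1 b'' * y b1 = 0) /\ (y b1 * c b1 b b'' = 0).
    move=> nK; case: (boolP (b1 \in K)) => b1K; last by rewrite yK // mulr0 mul0r.
    have /forallP/(_ b)/forall_inP/(_ b'') := (implyP (H b1) b1K).
    by rewrite in_setC => /(_ nK) /andP[/eqP -> /eqP ->]; rewrite mul0r mulr0.
  split=> b'' nK; rewrite ffunE big1 // => b _; rewrite big1 // => b' _.
    by rewrite -mulrA [y b' * _]mulrC (proj1 (key b b' b'' nK)) mulr0.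
  by rewrite -mulrA [x b' * _]mulrC mulrA (proj2 (key b' b b'' nK)) mul0r.
apply/forallP=> b1; apply/implyP=> b1K; apply/forallP=> b; apply/forall_inP=> b''.
rewrite in_setC => nK; have [H1 H2] := H (bvec b) (bvec b1) (bvec_in_span b1K).
by rewrite -!(amul_bvec c) (H1 _ nK) (H2 _ nK) eqxx.
Qed.

Definition preceq c (b' b : B) : bool :=
  [forall K : {set B}, ((b \in K) && ideal_spanb c K) ==> (b' \in K)].

Definition cell c (b b' : B) : bool := preceq c b b' && preceq c b' b.

Definition prec c (b' b : B) : bool := preceq c b' b && ~~ cell c b' b.

End StructConst.

Definition vpow (n : int) : laurent := << (1 : int) *g n >>.

Definition in_Zvinv (x : laurent) : Prop := forall k : int, 0 < k -> x@_k = 0.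

Section Afun.
Context {B : finType} (r : B -> B -> B -> laurent).

Definition a_ok (b : B) (m : nat) : Prop :=
  forall b' b'', cell r b' b -> cell r b'' b -> in_Zvinv (vpow (- m%:Z) * r b b' b'').

Definition is_a_function (a : B -> nat) : Prop :=
  forall b, a_ok b (a b) /\ (forall m, a_ok b m -> (a b <= m)%N).

Definition P1 (a : B -> nat) : Prop := forall b b', cell r b b' -> a b = a b'.

(* gamma^{b''}_{b,b'}: the constant term of v^{-a(b)} r^{b''}_{b,b'}
   (which lies in Z[v^-1]), i.e. the integer congruent to it mod
   v^-1 Z[v^-1], if b, b', b'' lie in one cell, and 0 otherwise. *)
Definition gamma (a : B -> nat) (b b' b'' : B) : int :=
  if cell r b b' && cell r b b'' then (vpow (- (a b)%:Z) * r b b' b'')@_0%R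
  else 0.

(* P2: the ring A^oo (basis t_b, structure constants gamma) has a unit
   sum_{d in D} t_d, the basis {t_b} being compatible with it. *)
Definition P2 (a : B -> nat) (D : {set B}) : Prop :=
  sc_compatible_one (gamma a) D.

(* x(v) and x(v') as elements of Z[v^+-1][v'^+-1] = lpoly laurent *)
Definition at_v (x : laurent) : lpoly laurent := << x *g 0%R >>.
Definition at_v' (x : laurent) : lpoly laurent :=
  \sum_(k <- msupp x) << (x@_k)%:~R *g k >>.

Definition P3 : Prop :=
  forall b1 b2 b3 b4 : B, cell r b2 b4 ->
    \sum_(beta | cell r beta b2) at_v (r b1 b2 beta) * at_v' (r beta b3 b4)
  = \sum_(beta | cell r beta b2) at_v (r b1 beta b4) * at_v' (r b2 b3 beta).

(* Phi(x) in A (x) A^oo, as coefficient vector on the basis {t_b};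
   Phi(b) = sum_{b1 in D, b2 in B, b1 ~ b2} r^{b2}_{b,b1} t_{b2}, extended
   A-linearly. *)
Definition Phi (D : {set B}) (x : {ffun B -> laurent}) : {ffun B -> laurent} :=
  [ffun b2 => \sum_b x b * \sum_(b1 in D | cell r b1 b2) r b b1 b2].

Definition act (a : B -> nat) (y z : {ffun B -> laurent}) : {ffun B -> laurent} :=
  [ffun b'' => \sum_b \sum_b' y b * z b' * (gamma a b b' b'')%:~R].

Definition in_prec_span (b : B) (z : {ffun B -> laurent}) : Prop :=
  forall b', ~~ prec r b' b -> z b' = 0.

End Afun.

From HB Require Import structures.
From mathcomp Require Import all_boot all_order all_algebra.
From mathcomp Require Import finmap monalg.
Set Implicit Arguments.
Unset Strict Implicit.
Unset Printing Implicit Defensive.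
Import GRing.Theory.
Local Open Scope ring_scope.

(* Fix b'' with b'' not < b.  If b'' is not
   <= b, both sides of the congruence vanish at b''.  Otherwise b'' ~ b, and
   the b''-coefficient of Phi(b0) * b is a double sum over d in D, d ~ b, and
   beta ~ d of r^beta_{b0,d} gamma^{b''}_{beta,b}; by P1 each gamma is the
   coefficient of v^{a(b)} in r^{b''}_{beta,b}, so reading P3 at the power
   v'^{a(b)} of the second indeterminate swaps the roles of the two structure
   constants, and the unit sum_{d in D} t_d of A^oo (P2) collapses the sum
   over d to r^{b''}_{b0,b}. *)

Lemma mcoeff_sumU_inj (K : choiceType) (G : zmodType) (h : K -> K)
    (s : seq K) (F : K -> G) (k : K) :
  injective h -> uniq s -> (k \notin s -> F k = 0) ->
  (\sum_(k' <- s) << F k' *g h k' >>)@_(h k) = F k.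
Proof.
move=> h_inj s_uniq Fk; rewrite raddf_sum /=.
under eq_bigr do rewrite mcoeffU (inj_eq h_inj).
case: (boolP (k \in s)) => ks.
  by rewrite (bigD1_seq k) //= eqxx big1 ?addr0 // => i /negbTE ->.
by rewrite Fk // big1_seq // => i /andP[_ iks]; case: eqP iks => // ->; rewrite (negbTE ks).
Qed.

Lemma mcoeff_sum (K : choiceType) (G : zmodType) (I : finType) (P : pred I)
    (F : I -> {malg G[K]}) (k : K) :
  (\sum_(i | P i) F i)@_k = \sum_(i | P i) (F i)@_k.
Proof. by elim/big_rec2: _ => [|i y1 y2 _ <-]; rewrite ?mcoeff0 ?mcoeffD. Qed.

Lemma mcoeff_vpowM (n k : int) (g : laurent) : (vpow n * g)@_k = g@_(k - n).
Proof.
rewrite /vpow lpolyM_def lmulUg -{1}(subrKC n k).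
under eq_bigr do rewrite mul1r.
by apply: mcoeff_sumU_inj; [exact: addrI | exact: fset_uniq | move/mcoeff_outdom].
Qed.

Lemma mcoeff_at_v' (q : laurent) (k : int) : (at_v' q)@_k = (q@_k)%:~R.
Proof.
by apply: (@mcoeff_sumU_inj _ _ id); [by [] | exact: fset_uniq | move/mcoeff_outdom ->].
Qed.

Lemma mcoeff_at_vM_at_v' (p q : laurent) (k : int) :
  (at_v p * at_v' q)@_k = p * (q@_k)%:~R.
Proof.
rewrite lpolyM_def /at_v lmulUg -mcoeff_at_v'.
under eq_bigr do rewrite add0r.
apply: (@mcoeff_sumU_inj _ _ id) => //.
by move/mcoeff_outdom ->; rewrite mulr0.
Qed.

Section Cells.
Context {B : finType} {R : comNzRingType} (c : B -> B -> B -> R).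

Lemma preceq_refl b : preceq c b b.
Proof. by apply/forallP => K; apply/implyP => /andP[]. Qed.

Lemma preceq_trans b1 b2 b3 : preceq c b1 b2 -> preceq c b2 b3 -> preceq c b1 b3.
Proof.
move=> /forallP le12 /forallP le23; apply/forallP => K; apply/implyP => /andP[b3K idK].
by apply: (implyP (le12 K)); rewrite idK andbT (implyP (le23 K)) ?b3K.
Qed.

Lemma cell_refl b : cell c b b.
Proof. by rewrite /cell preceq_refl. Qed.

Lemma cell_sym b b' : cell c b b' = cell c b' b.
Proof. by rewrite /cell andbC. Qed.

Lemma cell_trans b1 b2 b3 : cell c b1 b2 -> cell c b2 b3 -> cell c b1 b3.
Proof.
move=> /andP[le12 le21] /andP[le23 le32].
by rewrite /cell (preceq_trans le12 le23) (preceq_trans le32 le21).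
Qed.

Lemma sc_neq0_preceq b' b b'' : c b' b b'' != 0 -> preceq c b'' b.
Proof.
move=> nz; apply/forallP => K; apply/implyP => /andP[bK /forallP idK].
apply: contraR nz => b''K.
have /forallP/(_ b')/forall_inP/(_ b'') := implyP (idK b) bK.
by rewrite in_setC => /(_ b''K) /andP[/eqP -> _].
Qed.

Lemma amul_bvecr x b b'' : amul c x (bvec b) b'' = \sum_b0 x b0 * c b0 b b''.
Proof.
rewrite ffunE; apply: eq_bigr => b0 _.
rewrite (bigD1 b) //= ffunE eqxx mulr1 big1 ?addr0 // => b' nb'.
by rewrite ffunE (negbTE nb') mulr0 mul0r.
Qed.

End Cells.

Section Theorem6.
Context {B : finType} (r : B -> B -> B -> laurent) (a : B -> nat) (D : {set B}).
Hypotheses (P1r : P1 r a) (P2r : P2 r a D) (P3r : P3 r).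

Let gammaR (b b' b'' : B) : laurent := (gamma r a b b' b'')%:~R.

Lemma act_amul y z : act r a y z = amul gammaR y z.
Proof. by []. Qed.

Lemma gamma_cell b1 b2 b3 : cell r b1 b2 -> cell r b1 b3 ->
  gamma r a b1 b2 b3 = (r b1 b2 b3)@_(a b2)%:Z.
Proof.
move=> c12 c13; rewrite /gamma c12 c13 mcoeff_vpowM sub0r opprK.
by rewrite (P1r c12).
Qed.

Lemma gamma_out_cell b1 b2 b3 : ~~ (cell r b1 b2 && cell r b1 b3) ->
  gamma r a b1 b2 b3 = 0.
Proof. by rewrite /gamma => /negbTE ->. Qed.

Lemma P3_mcoeff b0 d b b'' (k : int) : cell r d b'' ->
  \sum_(beta | cell r beta d) r b0 d beta * ((r beta b b'')@_k)%:~R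
  = \sum_(beta | cell r beta d) r b0 beta b'' * ((r d b beta)@_k)%:~R.
Proof.
move=> cdb''.
transitivity (\sum_(beta | cell r beta d) (at_v (r b0 d beta) * at_v' (r beta b b''))@_k).
  by apply: eq_bigr => beta _; rewrite mcoeff_at_vM_at_v'.
transitivity (\sum_(beta | cell r beta d) (at_v (r b0 beta b'') * at_v' (r d b beta))@_k).
  have P3k := congr1 (mcoeff k) (P3r b0 b cdb'').
  exact: etrans (esym (mcoeff_sum _ _ _)) (etrans P3k (mcoeff_sum _ _ _)).
by apply: eq_bigr => beta _; rewrite mcoeff_at_vM_at_v'.
Qed.

(* The left-unit part of P2, restricted to one cell. *)
Lemma unit_sum_cell b beta : cell r beta b ->
  \sum_(d in D | cell r d b) ((r d b beta)@_(a b)%:Z)%:~R = (b == beta)%:R :> laurent.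
Proof.
case: P2r => left_unit _ _ _ cbb.
rewrite -[RHS]mulrz_nat -left_unit rmorph_sum /= big_mkcondr /=.
apply: eq_bigr => d _; case: ifP => cdb; last by rewrite gamma_out_cell ?cdb.
by rewrite gamma_cell // (cell_trans cdb) // cell_sym.
Qed.

Definition phi_coef (b0 b2 : B) : laurent := \sum_(b1 in D | cell r b1 b2) r b0 b1 b2.

Lemma PhiE x b2 : Phi r D x b2 = \sum_b0 x b0 * phi_coef b0 b2.
Proof. by rewrite ffunE. Qed.

Lemma phi_gamma_out_preceq b0 b b'' : ~~ preceq r b'' b ->
  \sum_b2 phi_coef b0 b2 * gammaR b2 b b'' = 0.
Proof.
move=> nle; apply: big1 => b2 _.
case: (boolP (cell r b2 b && cell r b2 b'')) => [/andP[c2b c2b'']|ncell].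
  have /andP[le _] : cell r b'' b by rewrite (cell_trans _ c2b) // cell_sym.
  by rewrite le in nle.
by rewrite /gammaR gamma_out_cell ?ncell ?mulr0.
Qed.

Lemma phi_gamma_cell b0 b b'' : cell r b'' b ->
  \sum_b2 phi_coef b0 b2 * gammaR b2 b b''
  = \sum_(d in D | cell r d b) \sum_(beta | cell r beta d)
      r b0 d beta * ((r beta b b'')@_(a b)%:Z)%:~R.
Proof.
move=> cb''b; under eq_bigr do rewrite mulr_suml.
rewrite (exchange_big_dep (mem D)) /=; last by move=> ? ? _ /andP[].
rewrite [RHS]big_mkcondr /=; apply: eq_bigr => d dD; case: ifP => cdb.
  apply: eq_big => [beta | beta /andP[_ cdbeta]]; first by rewrite dD cell_sym.
  have cbetab : cell r beta b by rewrite (cell_trans _ cdb) // cell_sym.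
  by rewrite /gammaR gamma_cell // (cell_trans cbetab) // cell_sym.
apply: big1 => b2 /andP[_ cdb2]; rewrite /gammaR /gamma.
by case: ifP => [/andP[/(cell_trans cdb2)] | _]; rewrite ?cdb ?mulr0.
Qed.

Lemma phi_gamma b0 b b'' : ~~ prec r b'' b ->
  \sum_b2 phi_coef b0 b2 * gammaR b2 b b'' = r b0 b b''.
Proof.
rewrite /prec negb_and negbK; case: (boolP (preceq r b'' b)) => //= le cb''b.
  rewrite phi_gamma_cell //.
  transitivity (\sum_(d in D | cell r d b) \sum_(beta | cell r beta b)
                  r b0 beta b'' * ((r d b beta)@_(a b)%:Z)%:~R).
    apply: eq_bigr => d /andP[_ cdb]; rewrite P3_mcoeff; last first.
      by rewrite (cell_trans cdb) // cell_sym.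
    apply: eq_bigl => beta; apply/idP/idP => [/(cell_trans)/(_ cdb) //|].
    by move/cell_trans; apply; rewrite cell_sym.
  rewrite exchange_big /=.
  under eq_bigr => beta cbetab do rewrite -mulr_sumr unit_sum_cell //.
  rewrite (bigD1 b) ?cell_refl //= eqxx mulr1 big1 ?addr0 // => beta /andP[_ nb].
  by rewrite eq_sym (negbTE nb) mulr0.
rewrite phi_gamma_out_preceq //; apply/esym/eqP; apply: contraR le.
exact: sc_neq0_preceq.
Qed.

End Theorem6.

Theorem mainTheorem6 (B : finType) (r : B -> B -> B -> laurent)
    (U : {set B}) (a : B -> nat) (D : {set B}) :
  sc_assoc r -> sc_compatible_one r U ->
  is_a_function r a -> P1 r a -> P2 r a D -> P3 r ->
  forall (x : {ffun B -> laurent}) (b : B),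
    in_prec_span r b (amul r x (bvec b) - act r a (Phi r D x) (bvec b)).
Proof.
move=> _ _ _ P1r P2r P3r x b b'' nprec.
rewrite act_amul ffunE amul_bvecr ffunE amul_bvecr; apply/eqP; rewrite subr_eq0; apply/eqP.
under [RHS]eq_bigr do rewrite PhiE mulr_suml.
rewrite exchange_big /=; apply: eq_bigr => b0 _.
rewrite -(phi_gamma P1r P2r P3r b0 nprec) mulr_sumr.
by apply: eq_bigr => b2 _; rewrite mulrA.
Qed.
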